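(* Let $\mathcal{R}$ be a commutative ring with unit, let $\mathcal{C}$ be a finite abstract simplicial complex, and let $\mathcal{V}=\{V_0,\ldots,V_n\}$ be a partition of $V(\mathcal{C})$. Let $S=[u_0,\ldots,u_n]$ and $T=[v_0,\ldots,v_n]$ be oriented colorful simplices of $(\mathcal{C},\mathcal{V})$ with $u_i,v_i\in V_i$ for all $i$. If $\widetilde H_{|I|-1}(\mathcal{C}[V_I];\mathcal{R})=0$ for all nonempty $I\subseteq\{0,1,\ldots,n\}$, where $V_I=\bigcup_{i\in I}V_i$, then there exists a chain $K\in C_{n+1}(\mathcal{C};\mathcal{R})$ whose boundary $\partial K$ has colorful support $T-S$.
   Context: $\mathcal{C}[X]=\{\sigma\in\mathcal{C}:\sigma\subseteq X\}$. A colorful simplex is a simplex of $\mathcal{C}$ with exactly one vertex from each $V_i$. $C_p(\mathcal{C};\mathcal{R})$ is the free $\mathcal{R}$-module on oriented $p$-simplices (with $[v_{\pi(0)},\ldots,v_{\pi(p)}]=\mathrm{sign}(\pi)[v_0,\ldots,v_p]$), $\partial$ is the usual simplicial boundary, and reduced homology uses $C_{-1}=\mathcal{R}$ with the augmentation map as $\partial_0$. The colorful support of an $n$-chain $c\in C_n(\mathcal{C};\mathcal{R})$ is the $n$-chain obtained from $c$ by keeping only those terms that are oriented colorful simplices of $(\mathcal{C},\mathcal{V})$. *)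

From HB Require Import structures.
From mathcomp Require Import all_boot all_order all_algebra.
Set Implicit Arguments. Unset Strict Implicit. Unset Printing Implicit Defensive.
Import GRing.Theory.
Local Open Scope ring_scope.

Definition is_complex (V : finType) (C : {set {set V}}) : Prop :=
  (forall s : {set V}, s \in C -> s != set0) /\
  (forall s t : {set V}, s \in C -> t \subset s -> t != set0 -> t \in C).

(* A fixed total order on vertices (used to pick the sorted representative
   of each oriented simplex): v < w iff enum_rank v < enum_rank w. *)
Definition vlt (V : finType) (v w : V) : bool := (enum_rank v < enum_rank w)%N.

(* Chains: R-valued functions on vertex sets; the p-chains of C are those
   supported on faces of C of cardinality p+1.  The value at a face s is the
   coefficient of the oriented simplex listing s in increasing order.
   The empty set carries the coefficient of C_{-1} = R (augmentation). *)
Definition chain (V : finType) (R : comPzRingType) := {ffun {set V} -> R}.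

Definition chain_in (V : finType) (R : comPzRingType) (C : {set {set V}})
  (X : {set V}) (k : nat) (c : chain V R) : Prop :=
  forall s, c s != 0 -> [/\ s \in C, s \subset X & #|s| = k].

(* simplicial boundary (for 0-chains it is the augmentation map):
   removing vertex v from the sorted simplex v |: t contributes sign
   (-1)^(position of v) = (-1)^#{w in t | w < v}. *)
Definition bd (V : finType) (R : comPzRingType) (c : chain V R) : chain V R :=
  [ffun t : {set V} =>
     \sum_(v in ~: t) (-1) ^+ #|[set w in t | vlt w v]| * c (v |: t)].

Definition ninv (V : finType) (n : nat) (u : 'I_n.+1 -> V) : nat :=
  #|[set p : 'I_n.+1 * 'I_n.+1 | (p.1 < p.2)%N && vlt (u p.2) (u p.1)]|.

Definition osimplex (V : finType) (R : comPzRingType) (n : nat)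
  (u : 'I_n.+1 -> V) : chain V R :=
  [ffun s : {set V} =>
     if s == [set u i | i : 'I_n.+1] then (-1) ^+ ninv u else 0].

(* The partition V_0,...,V_n of the vertex set is given by a colouring
   col : V -> 'I_n.+1, with V_i = col^-1(i). *)
Definition colclass (V : finType) (n : nat) (col : V -> 'I_n.+1)
  (I : {set 'I_n.+1}) : {set V} := [set v | col v \in I].

Definition colorful (V : finType) (n : nat) (C : {set {set V}})
  (col : V -> 'I_n.+1) (s : {set V}) : bool :=
  (s \in C) && [forall i : 'I_n.+1, #|[set v in s | col v == i]| == 1%N].

Definition colorful_support (V : finType) (R : comPzRingType) (n : nat)
  (C : {set {set V}}) (col : V -> 'I_n.+1) (c : chain V R) : chain V R :=
  [ffun s => if colorful C col s then c s else 0].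

(* tilde H_{k-1}(C[X]; R) = 0 : every (k-1)-cycle (chain on k-vertex faces,
   with the augmentation as boundary in degree 0) is a boundary *)
Definition reduced_acyclic (V : finType) (R : comPzRingType) (C : {set {set V}})
  (X : {set V}) (k : nat) : Prop :=
  forall c : chain V R, chain_in C X k c -> bd c = 0 ->
    exists b : chain V R, chain_in C X k.+1 b /\ bd b = c.

From HB Require Import structures.
From mathcomp Require Import all_boot all_order all_algebra zify.
Import GRing.Theory.
Set Implicit Arguments. Unset Strict Implicit. Unset Printing Implicit Defensive.
Local Open Scope ring_scope.

(* For a set J of colours let S_J and T_J be the faces of S and T with colours
   in J.  By induction on |J| we build chains K_J of C[V_J] with |J| + 1
   vertices satisfying the prism equation
     d K_J = T_J - S_J - sum_(j in J) (-1)^(pos of j in J) K_(J \ j).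
   Since S_J and T_J have the same boundary formula in terms of their faces,
   the right-hand side is a cycle (the double sum cancels exactly as in
   d d = 0), and it lives on |J|-vertex faces of C[V_J], so acyclicity
   provides K_J.  For J = all colours, K_(J \ j) avoids colour j and thus has
   no colourful simplex, so d K_J has colourful support T - S. *)

Section Chains.
Variables (V : finType) (R : comPzRingType).

HB.instance Definition _ := GRing.Lmodule.copy (chain V R) {ffun {set V} -> R^o}.

Lemma bd_is_linear : linear (@bd V R).
Proof.
move=> a c d; apply/ffunP => t; rewrite !ffunE scaler_sumr -big_split.
by apply: eq_bigr => w _; rewrite !ffunE mulrDr; congr (_ + _); exact: mulrCA.
Qed.

HB.instance Definition _ :=
  GRing.isLinear.Build R (chain V R) (chain V R) *:%R (@bd V R) bd_is_linear.

Lemma bd_supported (c : chain V R) s t :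
    (forall s', s' != s -> c s' = 0) ->
  bd c t = \sum_(w in s | t == s :\ w) (-1) ^+ #|[set w' in t | vlt w' w]| * c s.
Proof.
move=> c_s; rewrite ffunE big_mkcond [RHS]big_mkcond; apply: eq_bigr => w _.
rewrite inE; have [wt | wt] /= := boolP (w \in t).
  by case: ifP => // /andP[_ /eqP t_def]; move: wt; rewrite t_def !inE eqxx.
have [<- | ne] := eqVneq (w |: t) s; first by rewrite setU11 setU1K // eqxx.
rewrite c_s // mulr0; case: ifP => // /andP[ws /eqP t_def].
by move: ne; rewrite t_def setD1K // eqxx.
Qed.

Section ChainIn.
Variables (C : {set {set V}}) (X : {set V}) (k : nat).

Lemma chain_inB (a b : chain V R) :
  chain_in C X k a -> chain_in C X k b -> chain_in C X k (a - b).
Proof.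
move=> ha hb s; rewrite !ffunE.
have [a0 | /ha //] := eqVneq (a s) 0; have [b0 | /hb //] := eqVneq (b s) 0.
by rewrite a0 b0 subrr eqxx.
Qed.

Lemma chain_inZ (r : R) (c : chain V R) :
  chain_in C X k c -> chain_in C X k (r *: c).
Proof.
move=> hc s; rewrite ffunE => rc.
by apply: hc; apply: contraNneq rc => ->; rewrite scaler0.
Qed.

Lemma chain_in_sum (I : finType) (P : pred I) (F : I -> chain V R) :
  (forall i, P i -> chain_in C X k (F i)) -> chain_in C X k (\sum_(i | P i) F i).
Proof.
move=> hF s; rewrite sum_ffunE.
have [i /andP[Pi /(hF i Pi s) //] | no_term] :=
  pickP (fun i => P i && (F i s != 0)).
by rewrite big1 ?eqxx // => i Pi; apply/eqP; move: (no_term i); rewrite Pi => /negbFE.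
Qed.

Lemma chain_in_subset (Y : {set V}) (c : chain V R) :
  X \subset Y -> chain_in C X k c -> chain_in C Y k c.
Proof. by move=> XY hc s /hc [sC sX ->]; split=> //; apply: subset_trans XY. Qed.

End ChainIn.
End Chains.

Lemma sum_offdiag (m : nat) (Z : nmodType) (J : {set 'I_m}) (h : 'I_m -> 'I_m -> Z) :
  \sum_(i in J) \sum_(j in J :\ i) h i j =
  \sum_(i in J) \sum_(j in J | (j < i)%N) (h i j + h j i).
Proof.
under [RHS]eq_bigr do rewrite big_split /=.
rewrite big_split /= [X in _ + X](exchange_big_dep (mem J)) /=; last first.
  by move=> ? ? _ /andP[].
rewrite -big_split /=.
apply: eq_bigr => i iJ; rewrite (bigID (fun j : 'I_m => (j < i)%N)) /=.
congr (_ + _); apply: eq_bigl => j; rewrite !inE ?iJ /=.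
  by case: eqVneq => [->|]; rewrite ?ltnn ?andbF.
case: eqVneq => [->|ne]; first by rewrite ltnn andbF.
by case: ltngtP => // /val_inj eq_ji; rewrite eq_ji eqxx in ne.
Qed.

Section FamilyBoundary.
Variables (m : nat) (R : pzRingType) (M : lmodType R).

Definition ipos (J : {set 'I_m}) (j : 'I_m) : nat := \sum_(k in J) (k < j)%N.

Lemma ipos_setD1 (J : {set 'I_m}) i j :
  j \in J -> ipos J i = ((j < i)%N + ipos (J :\ j) i)%N.
Proof. exact: big_setD1. Qed.

Definition family_bd (G : {set 'I_m} -> M) (J : {set 'I_m}) : M :=
  \sum_(j in J) (-1) ^+ ipos J j *: G (J :\ j).

Lemma eq_family_bd (G G' : {set 'I_m} -> M) (J : {set 'I_m}) :
  {in J, forall j, G (J :\ j) = G' (J :\ j)} -> family_bd G J = family_bd G' J.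
Proof. by move=> eqG; apply: eq_bigr => j /eqG ->. Qed.

Lemma family_bdB (G G' : {set 'I_m} -> M) (J : {set 'I_m}) :
  family_bd (fun J => G J - G' J) J = family_bd G J - family_bd G' J.
Proof. by rewrite -sumrB; apply: eq_bigr => j _; rewrite scalerBr. Qed.

Lemma family_bdK (G : {set 'I_m} -> M) (J : {set 'I_m}) :
  family_bd (family_bd G) J = 0.
Proof.
rewrite /family_bd; under eq_bigr do rewrite scaler_sumr.
rewrite sum_offdiag big1 // => i iJ; rewrite big1 // => j /andP[jJ ji].
have -> : J :\ j :\ i = J :\ i :\ j by rewrite !setDDl setUC.
rewrite (ipos_setD1 i jJ) (ipos_setD1 j iJ) ji ltnNge (ltnW ji) !scalerA.
by rewrite exprS mulN1r mulNr scaleNr /= add0n -!exprD addnC addNr.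
Qed.

End FamilyBoundary.

Lemma linear_family_bd (m : nat) (R : pzRingType) (M N : lmodType R)
  (f : {linear M -> N}) (G : {set 'I_m} -> M) (J : {set 'I_m}) :
  f (family_bd G J) = family_bd (f \o G) J.
Proof. by rewrite linear_sum; apply: eq_bigr => j _; rewrite linearZ. Qed.

Lemma vlt_total (V : finType) (a b : V) : a != b -> vlt a b = ~~ vlt b a.
Proof.
move=> ab; rewrite /vlt; have : (enum_rank a : nat) != enum_rank b.
  by apply: contra ab => /eqP /val_inj /enum_rank_inj ->.
by case: ltngtP.
Qed.

Section OrientedFaces.
Variables (V : finType) (R : comPzRingType) (m : nat) (x : 'I_m -> V).
Hypothesis x_inj : injective x.

Definition ninv_on (J : {set 'I_m}) : nat :=
  \sum_(a in J) \sum_(b in J) ((a < b)%N && vlt (x b) (x a)).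

Definition osimplex_on (J : {set 'I_m}) : chain V R :=
  [ffun s => if s == x @: J then (-1) ^+ ninv_on J else 0].

Lemma imset_setD1 (J : {set 'I_m}) j : j \in J -> x @: (J :\ j) = x @: J :\ x j.
Proof.
by move=> jJ; rewrite -{2}(setD1K jJ) imsetU1 setU1K // mem_imset // !inE eqxx.
Qed.

Lemma card_sep_imset (A : {set 'I_m}) (P : pred V) :
  #|[set w in x @: A | P w]| = (\sum_(k in A) P (x k))%N.
Proof.
rewrite -sum1_card (eq_bigl (fun w => (w \in x @: A) && P w)) => [|w]; last first.
  by rewrite !inE.
rewrite big_imset_cond; last by move=> a b _ _ /x_inj.
by rewrite big_mkcondr; apply: eq_bigr => k _; case: (P (x k)).
Qed.

(* Up to an even number, the inversions of J involving j make up the difference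
   between the rank of x_j among the x_k and the rank of j in J. *)
Lemma ninv_on_setD1 (J : {set 'I_m}) j : j \in J ->
  odd ((\sum_(k in J :\ j) vlt (x k) (x j)) + ninv_on J) =
  odd (ipos J j + ninv_on (J :\ j)).
Proof.
move=> jJ.
set A := (\sum_(k in J :\ j) ((j < k)%N && vlt (x k) (x j)))%N.
set B := (\sum_(k in J :\ j) ((k < j)%N && vlt (x j) (x k)))%N.
have ninv_split : ninv_on J = (ninv_on (J :\ j) + A + B)%N.
  rewrite /ninv_on (big_setD1 j jJ) (big_setD1 j jJ) ltnn /=.
  under [X in (_ + X)%N]eq_bigr do rewrite (big_setD1 j jJ).
  rewrite big_split /= -/A -/B; lia.
have ipos_j : ipos J j = (\sum_(k in J :\ j) (k < j))%N.
  by rewrite /ipos (big_setD1 j jJ) ltnn.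
have swap : (\sum_(k in J :\ j) vlt (x k) (x j) + B =
              \sum_(k in J :\ j) (k < j) + A)%N.
  rewrite -!big_split; apply: eq_bigr => k; rewrite !inE => /andP[kj _].
  have xkj : x k != x j by apply: contra kj => /eqP /x_inj ->.
  rewrite (vlt_total xkj).
  case: ltngtP => [| | /val_inj kj'] /=; rewrite ?addn0 ?add0n //.
  - by case: vlt.
  - by rewrite kj' eqxx in kj.
have -> : ((\sum_(k in J :\ j) vlt (x k) (x j)) + ninv_on J =
           ipos J j + ninv_on (J :\ j) + A.*2)%N.
  by rewrite ninv_split ipos_j -addnn; lia.
by rewrite oddD odd_double addbF.
Qed.

Lemma bd_osimplex_on (J : {set 'I_m}) :
  bd (osimplex_on J) = family_bd osimplex_on J.
Proof.
apply/ffunP => t; rewrite (bd_supported _ (s := x @: J)); last first.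
  by move=> s ne; rewrite ffunE (negbTE ne).
rewrite big_imset_cond /=; last by move=> a b _ _ /x_inj.
rewrite sum_ffunE big_mkcondr; apply: eq_bigr => j jJ.
rewrite !ffunE -imset_setD1 //; case: eqP => [->|_]; last by rewrite scaler0.
rewrite card_sep_imset eqxx -!exprD -signr_odd ninv_on_setD1 // signr_odd.
exact: exprD.
Qed.

End OrientedFaces.

Section Colouring.
Variables (V : finType) (R : comPzRingType) (C : {set {set V}}) (n : nat).
Variable col : V -> 'I_n.+1.

Lemma colorful_support_is_linear : linear (@colorful_support V R n C col).
Proof.
move=> a c d; apply/ffunP => s; rewrite !ffunE.
by case: ifP => _; rewrite ?scaler0 ?addr0.
Qed.

HB.instance Definition _ := GRing.isLinear.Build R (chain V R) (chain V R) *:%R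
  (@colorful_support V R n C col) colorful_support_is_linear.

Lemma colclassS (I J : {set 'I_n.+1}) :
  I \subset J -> colclass col I \subset colclass col J.
Proof. by move=> IJ; apply/subsetP => w; rewrite !inE => /(subsetP IJ). Qed.

Lemma colorful_support_missing_colour (J : {set 'I_n.+1}) i k (c : chain V R) :
  i \notin J -> chain_in C (colclass col J) k c -> colorful_support C col c = 0.
Proof.
move=> iJ c_in; apply/ffunP => s; rewrite !ffunE; case: ifP => // /andP[_].
move=> /forallP /(_ i) /eqP one_i; apply: contraTeq iJ => /c_in [_ sJ _].
have /set0Pn [w] : [set w in s | col w == i] != set0 by rewrite -card_gt0 one_i.
by rewrite inE negbK => /andP[/(subsetP sJ)]; rewrite inE => wJ /eqP <-.
Qed.

Section Transversal.
Variable x : 'I_n.+1 -> V.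
Hypotheses (xC : [set x i | i : 'I_n.+1] \in C) (col_x : cancel x col).

Lemma colorful_transversal : colorful C col [set x i | i : 'I_n.+1].
Proof.
rewrite /colorful xC; apply/forallP => i; apply/eqP.
rewrite (_ : [set w in _ | col w == i] = [set x i]) ?cards1 //.
apply/setP => w; rewrite !inE; apply/andP/eqP => [[/imsetP[j _ ->] /eqP]|->].
  by rewrite col_x => ->.
by rewrite col_x eqxx imset_f.
Qed.

Lemma osimplex_onT : osimplex_on R x setT = osimplex R x.
Proof.
have imsetT : x @: setT = [set x i | i : 'I_n.+1].
  by apply/setP => w; apply/imsetP/imsetP => -[i _ ->]; exists i.
have ninvT : ninv x = ninv_on x setT.
  rewrite /ninv /ninv_on -sum1dep_card big_mkcond [RHS]pair_big /=.
  by apply: eq_big => [p | p _]; rewrite ?in_setT //; case: ifP.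
by apply/ffunP => s; rewrite !ffunE imsetT ninvT.
Qed.

Lemma colorful_support_osimplex :
  colorful_support C col (osimplex R x) = osimplex R x.
Proof.
apply/ffunP => s; rewrite !ffunE; case: eqP => [-> | _]; last by case: ifP.
by rewrite colorful_transversal.
Qed.

Lemma osimplex_on_chain_in (J : {set 'I_n.+1}) :
  is_complex C -> J != set0 -> chain_in C (colclass col J) #|J| (osimplex_on R x J).
Proof.
move=> [_ C_closed] J0 s; rewrite ffunE.
case: ifP => [/eqP -> _ | _]; last by rewrite eqxx.
split; last by rewrite card_imset //; apply: can_inj col_x.
- apply: C_closed xC _ _; last by rewrite imset_eq0.
  by apply/subsetP => w /imsetP[i _ ->]; apply: imset_f.
- by apply/subsetP => w /imsetP[i iJ ->]; rewrite inE col_x.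
Qed.

End Transversal.
End Colouring.

Section Prism.
Variables (R : comPzRingType) (V : finType) (C : {set {set V}}) (n : nat).
Variables (col : V -> 'I_n.+1) (u v : 'I_n.+1 -> V).
Hypothesis C_complex : is_complex C.
Hypotheses (uC : [set u i | i : 'I_n.+1] \in C) (vC : [set v i | i : 'I_n.+1] \in C).
Hypotheses (col_u : cancel u col) (col_v : cancel v col).
Hypothesis acyclic : forall I : {set 'I_n.+1}, I != set0 ->
  reduced_acyclic R C (colclass col I) #|I|.

Definition prism_target (F : {set 'I_n.+1} -> chain V R) (J : {set 'I_n.+1}) :=
  osimplex_on R v J - osimplex_on R u J - family_bd F J.

Definition prism_upto (k : nat) (F : {set 'I_n.+1} -> chain V R) : Prop :=
  forall J : {set 'I_n.+1}, (#|J| <= k)%N ->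
    chain_in C (colclass col J) #|J|.+1 (F J) /\ bd (F J) = prism_target F J.

Lemma prism_upto_face k F (J : {set 'I_n.+1}) j :
  prism_upto k F -> #|J| = k.+1 -> j \in J ->
  chain_in C (colclass col (J :\ j)) #|J| (F (J :\ j)) /\
  bd (F (J :\ j)) = prism_target F (J :\ j).
Proof.
move=> F_prism cardJ jJ; have cardJ' : #|J| = #|J :\ j|.+1 by rewrite (cardsD1 j) jJ.
by rewrite cardJ'; apply: F_prism; move: cardJ; rewrite cardJ' => -[->].
Qed.

Lemma prism_target_chain_in k F (J : {set 'I_n.+1}) :
  prism_upto k F -> #|J| = k.+1 -> chain_in C (colclass col J) #|J| (prism_target F J).
Proof.
move=> F_prism cardJ; have J0 : J != set0 by rewrite -card_gt0 cardJ.
apply: chain_inB; first by apply: chain_inB; apply: osimplex_on_chain_in.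
apply: chain_in_sum => j jJ; apply: chain_inZ.
have [F_in _] := prism_upto_face F_prism cardJ jJ.
by apply: chain_in_subset F_in; apply/colclassS/subD1set.
Qed.

Lemma bd_prism_target k F (J : {set 'I_n.+1}) :
  prism_upto k F -> #|J| = k.+1 -> bd (prism_target F J) = 0.
Proof.
move=> F_prism cardJ; rewrite !raddfB /= !bd_osimplex_on; try exact: can_inj.
rewrite (linear_family_bd _ F J) -!family_bdB.
rewrite (eq_family_bd (G' := family_bd F)) ?family_bdK //.
move=> j jJ /=; have [_ ->] := prism_upto_face F_prism cardJ jJ.
by rewrite opprB addrC subrK.
Qed.

Lemma prism_upto_step k F : prism_upto k F -> exists F', prism_upto k.+1 F'.
Proof.
move=> F_prism.
have : forall J : {set 'I_n.+1}, exists G : chain V R, #|J| = k.+1 ->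
    chain_in C (colclass col J) #|J|.+1 G /\ bd G = prism_target F J.
  move=> J; have [cardJ | cardJ] := eqVneq #|J| k.+1; last first.
    by exists 0 => /eqP; rewrite (negbTE cardJ).
  have J0 : J != set0 by rewrite -card_gt0 cardJ.
  have [b fill_b] := acyclic J0 (prism_target_chain_in F_prism cardJ)
    (bd_prism_target F_prism cardJ).
  by exists b.
case/fin_all_exists => G G_fill.
pose F' (J : {set 'I_n.+1}) := if #|J| == k.+1 then G J else F J.
exists F' => J cardJ; have -> : prism_target F' J = prism_target F J.
  congr (_ - _); apply: eq_family_bd => j jJ; rewrite /F' ifN //.
  by apply/eqP => cardJj; move: cardJ; rewrite (cardsD1 j) jJ cardJj add1n ltnn.
rewrite /F'; case: ifP => [/eqP /G_fill // | /negbT cardJ'].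
by apply: F_prism; rewrite -ltnS ltn_neqAle cardJ' cardJ.
Qed.

Lemma prism_exists k : exists F, prism_upto k F.
Proof.
elim: k => [|k [F /prism_upto_step //]].
exists (fun _ => 0) => J; rewrite leqn0 cards_eq0 => /eqP ->; split.
  by move=> s; rewrite ffunE eqxx.
rewrite raddf0 /prism_target /family_bd big_set0; apply/esym/eqP.
rewrite subr0 subr_eq0; apply/eqP/ffunP => s.
by rewrite !ffunE !imset0 /ninv_on !big_set0.
Qed.

Lemma colorful_support_prism_target F :
  prism_upto n F ->
  colorful_support C col (prism_target F setT) = osimplex R v - osimplex R u.
Proof.
move=> F_prism; have cardT : #|[set: 'I_n.+1]| = n.+1 by rewrite cardsT card_ord.
rewrite !raddfB /= !osimplex_onT !colorful_support_osimplex //.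
rewrite (linear_family_bd _ F setT) [family_bd _ _]big1 ?subr0 // => i _ /=.
have [F_in _] := prism_upto_face F_prism cardT (in_setT i).
by rewrite (colorful_support_missing_colour (i := i) _ F_in) ?scaler0 // !inE eqxx.
Qed.

End Prism.

Theorem lemma3p3 (R : comPzRingType) (V : finType) (C : {set {set V}})
  (n : nat) (col : V -> 'I_n.+1) (u v : 'I_n.+1 -> V) :
  is_complex C ->
  [set u i | i : 'I_n.+1] \in C -> [set v i | i : 'I_n.+1] \in C ->
  (forall i, col (u i) = i) -> (forall i, col (v i) = i) ->
  (forall I : {set 'I_n.+1}, I != set0 ->
     reduced_acyclic R C (colclass col I) #|I|) ->
  exists K : chain V R, chain_in C setT n.+2 K /\
    colorful_support C col (bd K) = osimplex R v - osimplex R u.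
Proof.
move=> C_complex uC vC col_u col_v acyclic.
have cardT : #|[set: 'I_n.+1]| = n.+1 by rewrite cardsT card_ord.
have [F F_prism] := prism_exists C_complex uC vC col_u col_v acyclic n.+1.
have [F_in bdF] := F_prism setT (eq_leq cardT).
exists (F setT); split.
  by move: F_in; rewrite cardT; apply: chain_in_subset; apply: subsetT.
rewrite bdF; apply: colorful_support_prism_target => // J /leqW; exact: F_prism.
Qed.
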